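(* Let $f:\mathbb{N}^d\to\mathbb{N}$ satisfy: (i) $f$ is nondecreasing; (ii) there exist quilt-affine $g_1,\ldots,g_m:\mathbb{N}^d\to\mathbb{Z}$ and $\vec{n}\in\mathbb{N}^d$ such that $f(\vec{x})=\min_k g_k(\vec{x})$ for all $\vec{x}\ge\vec{n}$ componentwise; (iii) for every $i\in\{1,\ldots,d\}$ and $j\in\mathbb{N}$, the fixed-input restriction $f_{[\vec{x}(i)\to j]}$ is obliviously-computable. Then $f$ is obliviously-computable.
   Context: A chemical reaction network (CRN) is a pair $(\mathcal{S},\mathcal{R})$ of a finite set of species and a finite set of reactions $(\vec{R},\vec{P})\in\mathbb{N}^{\mathcal{S}}\times\mathbb{N}^{\mathcal{S}}$. A configuration is $\vec{C}\in\mathbb{N}^{\mathcal{S}}$; a reaction is applicable if $\vec{R}\le\vec{C}$ and yields $\vec{C}-\vec{R}+\vec{P}$; reachability is via finite sequences of applicable reactions. To compute $f:\mathbb{N}^d\to\mathbb{N}$ the CRN has input species $X_1,\ldots,X_d$, output species $Y$, leader species $L$; the initial configuration $\vec{I}_{\vec{x}}$ has $\vec{x}(i)$ copies of $X_i$, one $L$, nothing else. $\vec{C}$ is stable if all configurations reachable from it have the same count of $Y$. The CRN stably computes $f$ if for every $\vec{x}$ and every $\vec{C}$ reachable from $\vec{I}_{\vec{x}}$ some stable $\vec{O}$ reachable from $\vec{C}$ has $\vec{O}(Y)=f(\vec{x})$. The CRN is output-oblivious if $Y$ is never a reactant; $f$ is obliviously-computable if stably computed by an output-oblivious CRN. A function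 $g:\mathbb{N}^d\to\mathbb{Z}$ is quilt-affine if it is nondecreasing and there exist $p\in\mathbb{N}_+$, $\vec{\nabla}\in\mathbb{Q}^d_{\ge0}$, $B:\mathbb{Z}^d/p\mathbb{Z}^d\to\mathbb{Q}$ with $g(\vec{x})=\vec{\nabla}\cdot\vec{x}+B(\vec{x}\bmod p)$. The fixed-input restriction is $f_{[\vec{x}(i)\to j]}(\vec{x})=f(\vec{x}(1),\ldots,\vec{x}(i-1),j,\vec{x}(i+1),\ldots,\vec{x}(d))$. *)

From Stdlib Require List.
From mathcomp Require Import all_boot all_order all_algebra.
Set Implicit Arguments. Unset Strict Implicit. Unset Printing Implicit Defensive.
Import Order.TTheory GRing.Theory Num.Theory.

Definition vec (d : nat) := 'I_d -> nat.

Record crn (d : nat) : Type := Crn {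
  species : finType;
  reactions : seq ((species -> nat) * (species -> nat));
  inX : 'I_d -> species;
  outY : species;
  leaderL : species;
  inX_inj : injective inX;
  outY_notin : forall i, outY <> inX i;
  leaderL_notin : forall i, leaderL <> inX i;
  leader_neq_out : leaderL <> outY
}.

Definition config (d : nat) (C : crn d) := species C -> nat.

Definition step (d : nat) (C : crn d) (c c' : config C) : Prop :=
  exists2 r, List.In r (reactions C) &
    (forall s, r.1 s <= c s) /\ (forall s, c' s = c s - r.1 s + r.2 s).

Inductive reachable (d : nat) (C : crn d) : config C -> config C -> Prop :=
| reach_refl c : reachable c c
| reach_step c c' c'' : step c c' -> reachable c' c'' -> reachable c c''.

Definition init_config (d : nat) (C : crn d) (x : vec d) : config C :=
  fun s => if s == leaderL C then 1
           else if [pick i | s == inX C i] is Some i then x i else 0.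

Definition stable (d : nat) (C : crn d) (c : config C) : Prop :=
  forall c', reachable c c' -> c' (outY C) = c (outY C).

Definition stably_computes (d : nat) (C : crn d) (f : vec d -> nat) : Prop :=
  forall (x : vec d) (c : config C), reachable (@init_config d C x) c ->
    exists O : config C, [/\ reachable c O, stable O & O (outY C) = f x].

Definition output_oblivious (d : nat) (C : crn d) : Prop :=
  forall r, List.In r (reactions C) -> r.1 (outY C) = 0.

Definition obliviously_computable (d : nat) (f : vec d -> nat) : Prop :=
  exists C : crn d, output_oblivious C /\ stably_computes C f.

Definition vle (d : nat) (x y : vec d) : Prop := forall i, x i <= y i.

Definition nondecreasing_nat (d : nat) (f : vec d -> nat) : Prop :=
  forall x y, vle x y -> f x <= f y.

Local Open Scope ring_scope.
Definition quilt_affine (d : nat) (g : vec d -> int) : Prop :=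
  (forall x y, vle x y -> (g x <= g y)%R) /\
  exists (p : nat) (nabla : 'I_d -> rat) (B : vec d -> rat),
    (0 < p)%N /\ (forall i, (0 <= nabla i)%R) /\
    forall x, (((g x)%:~R : rat) = \sum_(i < d) nabla i * (x i)%:R + B (fun i => (x i %% p)%N))%R.

Local Close Scope ring_scope.
Definition fix_input (d : nat) (f : vec d -> nat) (i : 'I_d) (j : nat) : vec d -> nat :=
  fun x => f (fun k => if k == i then j else x k).

(* Let M bound n componentwise.  By monotonicity f x <= g_k (max(x, M)) for every
   k, and f x <= f_[x(i) -> j] x whenever x(i) <= j; equality holds for some k
   when x >= M, and for j = x(i) when x(i) < M.  So f x is the minimum of
   finitely many candidates, each of which is produced output-obliviously.  A
   leader absorbs the inputs one at a time, remembering each count exactly below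
   M and modulo a common period P of the increments of the g_k above M; this
   determines the increment of every g_k (max(x, M)), which it emits as tokens
   A_k.  In parallel, copies of CRNs for the restrictions f_[x(i) -> j], j < M,
   are fed copies of the inputs.  A min reaction turns one unit of every
   candidate still plausible for the remembered counts into one Y; once
   everything else has settled it fires until some candidate is exhausted, and
   then Y is the minimum and can no longer grow. *)

From Stdlib Require Import FunctionalExtensionality.
From mathcomp Require Import all_boot all_order all_algebra zify ring.
Import Order.TTheory GRing.Theory Num.Theory.
Set Implicit Arguments. Unset Strict Implicit. Unset Printing Implicit Defensive.

Lemma In_enum (T : finType) (x : T) : List.In x (enum T).
Proof.
have : x \in enum T by rewrite mem_enum.
by elim: (enum T) => //= a s IH; rewrite inE => /predU1P [->|/IH]; [left|right].
Qed.

Definition fire (S : Type) (r : (S -> nat) * (S -> nat)) (c : S -> nat) : S -> nat :=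
  fun s => c s - r.1 s + r.2 s.

Section Reachability.
Variables (d : nat) (C : crn d).
Implicit Types (c : config C) (r : (species C -> nat) * (species C -> nat)).

Lemma step_fire r c :
  List.In r (reactions C) -> (forall s, r.1 s <= c s) -> step c (fire r c).
Proof. by move=> Hr Hle; exists r. Qed.

Lemma stepE c c' : step c c' ->
  exists2 r, List.In r (reactions C) & (forall s, r.1 s <= c s) /\ c' = fire r c.
Proof.
by case=> r Hr [Hle Hc']; exists r => //; split => //; apply: functional_extensionality.
Qed.

Lemma reachable1 c c' : step c c' -> reachable c c'.
Proof. by move/reach_step; apply; apply: reach_refl. Qed.

Lemma reachable_trans c1 c2 c3 : reachable c1 c2 -> reachable c2 c3 -> reachable c1 c3.
Proof. by elim=> // c c' c'' Hs _ IH /IH; apply: reach_step. Qed.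

Lemma reachable_inv (I : config C -> Prop) :
  (forall c c', step c c' -> I c -> I c') -> forall c c', reachable c c' -> I c -> I c'.
Proof. by move=> HI c c'; elim=> // c1 c2 c3 /HI Hs _ IH /Hs. Qed.

Lemma reachable_count_le s :
  (forall r, List.In r (reactions C) -> r.2 s <= r.1 s) ->
  forall c c', reachable c c' -> c' s <= c s.
Proof.
move=> Hs c c'; elim=> // c1 c2 c3 /stepE [r Hr [Hle ->]] _.
by have := Hs r Hr; have := Hle s; rewrite /fire; lia.
Qed.

Lemma reachable_count_ge s :
  (forall r, List.In r (reactions C) -> r.1 s <= r.2 s) ->
  forall c c', reachable c c' -> c s <= c' s.
Proof.
move=> Hs c c'; elim=> // c1 c2 c3 /stepE [r Hr [Hle ->]] _.
by have := Hs r Hr; have := Hle s; rewrite /fire; lia.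
Qed.

Lemma stable_reachable c c' : stable c -> reachable c c' -> stable c'.
Proof.
move=> Sc Rcc' c'' Rc'c''.
by rewrite (Sc _ Rcc') (Sc _ (reachable_trans Rcc' Rc'c'')).
Qed.

Lemma reachable_forall_goals (T : finType) (I : config C -> Prop)
    (Q : T -> config C -> Prop) :
  (forall c c', I c -> reachable c c' -> I c') ->
  (forall t c c', Q t c -> reachable c c' -> Q t c') ->
  (forall t c, I c -> exists2 c', reachable c c' & Q t c') ->
  forall c, I c -> exists2 c', reachable c c' & forall t, Q t c'.
Proof.
move=> I_pers Q_pers reachQ c Ic.
suff [c' Rcc' Qc'] : exists2 c', reachable c c' & forall t, t \in enum T -> Q t c'.
  by exists c' => // t; apply: Qc'; rewrite mem_enum.
elim: (enum T) => [|t s [c1 R1 Q1]]; first by exists c => //; apply: reach_refl.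
have [c2 R2 Q2] := reachQ t c1 (I_pers _ _ Ic R1).
exists c2; first exact: reachable_trans R1 R2.
by move=> t'; rewrite inE => /predU1P [-> //|/Q1 Qt']; apply: Q_pers Qt' R2.
Qed.

End Reachability.

Lemma reachable_map (d d' : nat) (C : crn d) (D : crn d') (h : config C -> config D) :
  (forall c c', step c c' -> reachable (h c) (h c')) ->
  forall c c', reachable c c' -> reachable (h c) (h c').
Proof.
move=> Hh c c'; elim=> [c0|c1 c2 c3 /Hh R12 _ R23]; first exact: reach_refl.
exact: reachable_trans R12 R23.
Qed.

Section Reduction.
Variables (M P : nat).
Hypothesis P_gt0 : 0 < P.

Definition redn (t : nat) : nat := if t < M then t else M + (t - M) %% P.

Lemma redn_small t : t < M -> redn t = t.
Proof. by rewrite /redn => ->. Qed.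

Lemma redn_big t : M <= t -> redn t = M + (t - M) %% P.
Proof. by rewrite /redn ltnNge => ->. Qed.

Lemma redn_lt t : redn t < M + P.
Proof. by rewrite /redn; case: ifP => [/ltn_addr //|_]; rewrite ltn_add2l ltn_pmod. Qed.

Lemma rednK t : redn (redn t) = redn t.
Proof.
have [tM|Mt] := ltnP t M; first by rewrite !redn_small.
by rewrite (redn_big Mt) redn_big ?leq_addr // addKn modn_mod.
Qed.

Lemma rednS t : redn t.+1 = redn (redn t).+1.
Proof.
have [/redn_small -> //|Mt] := ltnP t M.
rewrite (redn_big Mt) !redn_big; [|lia|lia].
have -> : t.+1 - M = (t - M) + 1 by lia.
have -> : (M + (t - M) %% P).+1 - M = (t - M) %% P + 1 by lia.
by rewrite modnDml.
Qed.

Lemma leq_redn t j : j < M -> (redn t <= j) = (t <= j).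
Proof.
move=> jM; have [/redn_small -> //|Mt] := ltnP t M.
by rewrite redn_big //; apply/idP/idP; lia.
Qed.

Lemma maxn_redn t : maxn (redn t) M %% P = maxn t M %% P.
Proof.
case/orP: (leqVgt M t) => [Mt|/redn_small -> //].
rewrite redn_big // (maxn_idPl (leq_addr _ _)) (maxn_idPl Mt).
by rewrite -{2}(subnKC Mt) modnDmr.
Qed.

End Reduction.

Definition incr_at (d : nat) (t : vec d) (l : 'I_d) : vec d :=
  fun i => if i == l then (t i).+1 else t i.

Definition vmax (d : nat) (t : vec d) (M : nat) : vec d := fun i => maxn (t i) M.

Lemma vmax_incr_small d (t : vec d) l M : t l < M -> vmax (incr_at t l) M = vmax t M.
Proof.
move=> tlM; apply: functional_extensionality => i; rewrite /vmax /incr_at.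
by case: eqP => [->|]; lia.
Qed.

Lemma vmax_incr_big d (t : vec d) l M :
  M <= t l -> vmax (incr_at t l) M = incr_at (vmax t M) l.
Proof.
move=> Mtl; apply: functional_extensionality => i; rewrite /vmax /incr_at.
by case: eqP => [->|]; lia.
Qed.

Local Open Scope ring_scope.

Definition incr_periodic (d : nat) (g : vec d -> int) (p : nat) : Prop :=
  forall y z : vec d, (forall i, y i %% p = z i %% p)%N ->
  forall l, g (incr_at y l) - g y = g (incr_at z l) - g z.

Lemma incr_periodic_dvd d (g : vec d -> int) p q :
  (p %| q)%N -> incr_periodic g p -> incr_periodic g q.
Proof.
move=> pq gp y z yz; apply: gp => i.
by rewrite -(modn_dvdm (y i) pq) -(modn_dvdm (z i) pq) yz.
Qed.

Lemma quilt_affine_incr_periodic d (g : vec d -> int) :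
  quilt_affine g -> exists2 p, (0 < p)%N & incr_periodic g p.
Proof.
move=> [_ [p [nabla [B [p_gt0 [_ gE]]]]]]; exists p => // y z yz l.
apply: (@intr_inj rat); rewrite !intrB !gE.
have sum_incr (t : vec d) : \sum_(i < d) nabla i * (incr_at t l i)%:R =
    \sum_(i < d) nabla i * (t i)%:R + nabla l.
  rewrite (bigD1 l) //= [in RHS](bigD1 l) //= /incr_at eqxx -addn1 natrD.
  rewrite (eq_bigr (fun i => nabla i * (t i)%:R)) => [|i /negbTE -> //].
  ring.
have mod_incr : (fun i => incr_at y l i %% p)%N = (fun i => incr_at z l i %% p)%N.
  apply: functional_extensionality => i; rewrite /incr_at; case: (i == l); last exact: yz.
  by rewrite -[(y i).+1]addn1 -[(z i).+1]addn1 -modnDml yz modnDml.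
have mod_y : (fun i => y i %% p)%N = (fun i => z i %% p)%N.
  exact: functional_extensionality.
rewrite !sum_incr mod_incr mod_y; ring.
Qed.

Lemma common_incr_period d m (g : 'I_m -> vec d -> int) :
  (forall k, quilt_affine (g k)) -> exists2 P, (0 < P)%N & forall k, incr_periodic (g k) P.
Proof.
move=> gq; have [p p_gt0 gp] := fin_all_exists2 (fun k => quilt_affine_incr_periodic (gq k)).
exists (\big[lcmn/1%N]_k p k).
  by elim/big_ind: _ => // a b; rewrite lcmn_gt0 => -> ->.
by move=> k; apply: incr_periodic_dvd (gp k); apply: (biglcmn_sup k).
Qed.

Local Close Scope ring_scope.

Lemma fix_input_eq d (f : vec d -> nat) i j (x y : vec d) :
  (forall k, k != i -> x k = y k) -> fix_input f i j x = fix_input f i j y.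
Proof.
move=> xy; rewrite /fix_input; congr f; apply: functional_extensionality => k.
by case: eqP => // /eqP /xy.
Qed.

Lemma fix_input_id d (f : vec d -> nat) i (x : vec d) : fix_input f i (x i) x = f x.
Proof.
by rewrite /fix_input; congr f; apply: functional_extensionality => k; case: eqP => [->|].
Qed.

Lemma fix_input_ge d (f : vec d -> nat) i j (x : vec d) :
  nondecreasing_nat f -> x i <= j -> f x <= fix_input f i j x.
Proof. by move=> f_mono xij; apply: f_mono => k; case: eqP => [->|]. Qed.

Section Construction.
Variables (d m M P : nat) (f : vec d -> nat) (g : 'I_m.+1 -> vec d -> int) (n : vec d).
Hypothesis P_gt0 : 0 < P.
Hypothesis g_mono : forall k x y, vle x y -> (g k x <= g k y)%R.
Hypothesis g_periodic : forall k, incr_periodic (g k) P.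
Hypothesis f_mono : nondecreasing_nat f.
Hypothesis n_le_M : forall i, n i <= M.
Hypothesis f_min : forall x, vle n x ->
  (forall k, (Posz (f x) <= g k x)%R) /\ exists k, Posz (f x) = g k x.

Definition restr : finType := ('I_d * 'I_M)%type.
Variable C : restr -> crn d.
Hypothesis C_oblivious : forall ij, output_oblivious (C ij).
Hypothesis C_computes : forall ij, stably_computes (C ij) (fix_input f ij.1 ij.2).

Definition memory : finType := {ffun 'I_d -> 'I_(M + P)}.
Definition sub_species (ij : restr) : finType := species (C ij).

(* SL0 is the leader before the start reaction, SL w the leader remembering the
   reduced counts w of the inputs absorbed so far, SA k a token of g_k, SSub a
   species of one of the sub-CRNs C ij, and SW ij an output of C ij consumed by
   a min reaction. *)
Definition spec : finType :=
  ('I_d + (bool + (memory + ('I_m.+1 + ({ij : restr & sub_species ij} + restr)))))%type.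

Local Notation SX l := (inl l).
Local Notation SY := (inr (inl true)).
Local Notation SL0 := (inr (inl false)).
Local Notation SL w := (inr (inr (inl w))).
Local Notation SA k := (inr (inr (inr (inl k)))).
Local Notation SSub u := (inr (inr (inr (inr (inl u))))).
Local Notation SW ij := (inr (inr (inr (inr (inr ij))))).

Definition sX (l : 'I_d) : spec := SX l.
Definition sY : spec := SY.
Definition sL0 : spec := SL0.
Definition sL (w : memory) : spec := SL w.
Definition sA (k : 'I_m.+1) : spec := SA k.
Definition sSub (ij : restr) (s : sub_species ij) : spec := SSub (existT _ ij s).
Definition sW (ij : restr) : spec := SW ij.
Arguments sSub {ij} s.

Definition redv (t : vec d) : memory := [ffun i => Ordinal (redn_lt M P_gt0 (t i))].
Definition memv (w : memory) : vec d := fun i => w i.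
Definition mem_next (w : memory) (l : 'I_d) : memory := redv (incr_at (memv w) l).
Definition gval (k : 'I_m.+1) (t : vec d) : nat := absz (g k (vmax t M)).
Definition ginc (k : 'I_m.+1) (w : memory) (l : 'I_d) : nat :=
  gval k (incr_at (memv w) l) - gval k (memv w).
Definition enabled (w : memory) (ij : restr) : bool := w ij.1 <= ij.2.

Lemma vle_n_vmax t : vle n (vmax t M).
Proof. by move=> i; rewrite /vmax; have := n_le_M i; lia. Qed.

Lemma f_le_gval k t : f t <= gval k t.
Proof.
have [fg _] := f_min (vle_n_vmax t); have := fg k.
have : f t <= f (vmax t M) by apply: f_mono => i; rewrite /vmax; lia.
by rewrite /gval; lia.
Qed.

Lemma g_vmax_ge0 k t : (0 <= g k (vmax t M))%R.
Proof. by have [fg _] := f_min (vle_n_vmax t); have := fg k; lia. Qed.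

Lemma g_incr_ge k t l : (g k t <= g k (incr_at t l))%R.
Proof. by apply: g_mono => i; rewrite /incr_at; case: (i == l). Qed.

Lemma gval_incr k t l : gval k (incr_at t l) = gval k t + ginc k (redv t) l.
Proof.
rewrite /ginc /gval; set u := memv (redv t).
have ut i : u i = redn M P (t i) by rewrite /u /memv ffunE.
clearbody u; case/orP: (leqVgt M (t l)) => [tl_ge|tl_lt]; last first.
  have ul_lt : u l < M by rewrite ut redn_small.
  by rewrite (vmax_incr_small tl_lt) (vmax_incr_small ul_lt) subnn addn0.
have ul_ge : M <= u l by rewrite ut redn_big // leq_addr.
rewrite (vmax_incr_big tl_ge) (vmax_incr_big ul_ge).
have : (g k (incr_at (vmax t M) l) - g k (vmax t M) =
        g k (incr_at (vmax u M) l) - g k (vmax u M))%R.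
  by apply: g_periodic => i; rewrite /vmax ut maxn_redn.
move: (g_vmax_ge0 k t) (g_vmax_ge0 k u) (g_incr_ge k (vmax t M) l) (g_incr_ge k (vmax u M) l).
lia.
Qed.

Lemma redv_incr t l : redv (incr_at t l) = mem_next (redv t) l.
Proof.
apply/ffunP => i; apply: val_inj.
rewrite /mem_next /redv /memv /incr_at !ffunE /= ?ffunE /=.
by case: (i == l); [exact: rednS | rewrite rednK].
Qed.

Lemma enabled_redv t (ij : restr) : enabled (redv t) ij = (t ij.1 <= ij.2).
Proof. by rewrite /enabled /redv ffunE leq_redn. Qed.

Definition reaction : Type := ((spec -> nat) * (spec -> nat))%type.

Definition rx_start : reaction :=
  (fun s : spec => if s is SL0 then 1 else 0,
   fun s : spec => match s with
     | SL w => nat_of_bool (w == redv (fun=> 0))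
     | SA k => gval k (fun=> 0)
     | SSub u => nat_of_bool (tagged u == leaderL (C (tag u)))
     | _ => 0 end).

(* The restriction with x(i) fixed ignores input i, so C (i, j) gets no copy of X i. *)
Definition rx_absorb (w : memory) (l : 'I_d) : reaction :=
  (fun s : spec => match s with
     | SL w' => nat_of_bool (w' == w)
     | SX l' => nat_of_bool (l' == l)
     | _ => 0 end,
   fun s : spec => match s with
     | SL w' => nat_of_bool (w' == mem_next w l)
     | SA k => ginc k w l
     | SSub u => nat_of_bool (((tag u).1 != l) && (tagged u == inX (C (tag u)) l))
     | _ => 0 end).

Definition embed (ij : restr) (v : sub_species ij -> nat) : spec -> nat := fun s =>
  if s is SSub u then
    if tag u == ij then v (tagged_as (existT sub_species ij (leaderL (C ij))) u) else 0
  else 0.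

Definition rx_sub (ij : restr) (r : (sub_species ij -> nat) * (sub_species ij -> nat)) : reaction :=
  (embed r.1, embed r.2).

Definition rx_min (w : memory) : reaction :=
  (fun s : spec => match s with
     | SL w' => nat_of_bool (w' == w)
     | SA _ => 1
     | SSub u => nat_of_bool (enabled w (tag u) && (tagged u == outY (C (tag u))))
     | _ => 0 end,
   fun s : spec => match s with
     | SL w' => nat_of_bool (w' == w)
     | SY => 1
     | SW ij => nat_of_bool (enabled w ij)
     | _ => 0 end).

Definition rxns : seq reaction :=
  (rx_start :: List.flat_map (fun w => List.map (rx_absorb w) (enum 'I_d)) (enum memory)
   ++ List.flat_map (fun ij => List.map (@rx_sub ij) (reactions (C ij))) (enum restr)
   ++ List.map rx_min (enum memory))%list.

Lemma In_rxns r : List.In r rxns ->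
  [\/ r = rx_start, exists w l, r = rx_absorb w l,
      exists ij r0, List.In r0 (reactions (C ij)) /\ r = rx_sub r0
    | exists w, r = rx_min w].
Proof.
rewrite /rxns /= => [[<-|]]; first by constructor 1.
rewrite !List.in_app_iff => [[|[]]].
- move/List.in_flat_map => [w [_ /List.in_map_iff [l [<- _]]]]; constructor 2; eauto.
- move/List.in_flat_map => [ij [_ /List.in_map_iff [r0 [<- ?]]]]; constructor 3; eauto.
- move/List.in_map_iff => [w [<- _]]; constructor 4; eauto.
Qed.

Lemma In_rx_start : List.In rx_start rxns.
Proof. by left. Qed.

Lemma In_rx_absorb w l : List.In (rx_absorb w l) rxns.
Proof.
right; apply/List.in_app_iff; left; apply/List.in_flat_map; exists w.
by split; [apply: In_enum | apply/List.in_map_iff; exists l; split => //; apply: In_enum].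
Qed.

Lemma In_rx_sub ij r0 : List.In r0 (reactions (C ij)) -> List.In (rx_sub r0) rxns.
Proof.
move=> Hr0; right; apply/List.in_app_iff; right; apply/List.in_app_iff; left.
apply/List.in_flat_map; exists ij; split; first exact: In_enum.
by apply/List.in_map_iff; exists r0.
Qed.

Lemma In_rx_min w : List.In (rx_min w) rxns.
Proof.
right; apply/List.in_app_iff; right; apply/List.in_app_iff; right.
by apply/List.in_map_iff; exists w; split => //; apply: In_enum.
Qed.

Lemma sX_inj : injective sX. Proof. by move=> l l' []. Qed.

Definition min_crn : crn d :=
  @Crn d spec rxns sX sY sL0 sX_inj (fun _ => ltac:(discriminate))
       (fun _ => ltac:(discriminate)) ltac:(discriminate).

Lemma min_crn_oblivious : output_oblivious min_crn.
Proof. by move=> r /In_rxns [|[w [l]]|[ij [r0 [_]]]|[w]] ->. Qed.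

Local Notation reach := (@reachable d min_crn).
Local Notation init x := (@init_config d min_crn x).

Lemma reach_L0_le c c' : reach c c' -> c' sL0 <= c sL0.
Proof. by apply: reachable_count_le => r /In_rxns [|[w [l]]|[ij [r0 [_]]]|[w]] ->. Qed.

Lemma reach_X_le l c c' : reach c c' -> c' (sX l) <= c (sX l).
Proof.
by apply: reachable_count_le => r /In_rxns [|[w [l']]|[ij [r0 [_]]]|[w]] -> //=; case: eqP.
Qed.

Lemma reach_Y_ge c c' : reach c c' -> c sY <= c' sY.
Proof. by apply: reachable_count_ge => r /In_rxns [|[w [l]]|[ij [r0 [_]]]|[w]] ->. Qed.

(* C ij sees the start leader SL0 as its own leader, the inputs SX l (l <> i) as
   its inputs, and the outputs SW ij consumed by min reactions as still present,
   so that runs of min_crn project to runs of C ij. *)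
Definition proj (ij : restr) (c : spec -> nat) : config (C ij) := fun s =>
  c (sSub s) + (if s == leaderL (C ij) then c sL0 else 0)
  + (if s == outY (C ij) then c (sW ij) else 0)
  + (if [pick l | s == inX (C ij) l] is Some l then
       if l == ij.1 then 0 else c (sX l)
     else 0).
Arguments proj : clear implicits.

Lemma proj_fire ij r (c : spec -> nat) : (forall s, r.1 s <= c s) ->
  (forall s, proj ij r.1 s <= proj ij c s) /\
  proj ij (fire r c) = fire (proj ij r.1, proj ij r.2) (proj ij c).
Proof.
case: r => r1 r2 /= Hle; split => [s|]; last apply: functional_extensionality => s;
  rewrite /proj /fire /=; have := Hle (sSub s); have := Hle sL0; have := Hle (sW ij);
  case: pickP => [l _|_]; try (have := Hle (sX l); case: (l == ij.1));
  case: (s == leaderL _); case: (s == outY _); lia.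
Qed.

Lemma proj_fire_neutral ij r (c : spec -> nat) : (forall s, r.1 s <= c s) ->
  proj ij r.1 =1 proj ij r.2 -> proj ij (fire r c) = proj ij c.
Proof.
move=> Hle Hr; have [Hle' ->] := proj_fire ij Hle.
apply: functional_extensionality => s.
by move: (Hle' s) (Hr s); rewrite /fire /=; lia.
Qed.

Lemma embed_sSub ij (v : sub_species ij -> nat) s : embed v (sSub s) = v s.
Proof. by rewrite /embed /sSub /= eqxx tagged_asE. Qed.

Lemma embed_cases ij (v : sub_species ij -> nat) (x : spec) :
  (exists2 s, x = sSub s & embed v x = v s) \/ embed v x = 0.
Proof.
case: x => [l|[b|[w|[k|[[ij' s]|ij']]]]]; try by right.
have [E|ne] := eqVneq ij' ij; first by subst ij'; left; exists s => //; apply: embed_sSub.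
by right; rewrite /embed /= (negbTE ne).
Qed.

Lemma proj_embed ij (v : sub_species ij -> nat) : proj ij (embed v) = v.
Proof.
apply: functional_extensionality => s; rewrite /proj embed_sSub /= !if_same.
by case: pickP => [l _|_]; rewrite ?if_same !addn0.
Qed.

Lemma proj_embed_other ij ij' (v : sub_species ij' -> nat) s :
  ij != ij' -> proj ij (embed v) s = 0.
Proof.
move=> ne; rewrite /proj /embed /sSub /= (negbTE ne) !if_same.
by case: pickP => [l _|_]; rewrite ?if_same.
Qed.

Lemma inX_neq_leader ij l : (inX (C ij) l == leaderL (C ij)) = false.
Proof. by apply/eqP => /esym; apply: leaderL_notin. Qed.

Lemma inX_neq_out ij l : (inX (C ij) l == outY (C ij)) = false.
Proof. by apply/eqP => /esym; apply: outY_notin. Qed.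

Lemma proj_rx_start ij : proj ij rx_start.1 =1 proj ij rx_start.2.
Proof.
move=> s; rewrite /proj /=.
by case: pickP => [l _|_]; try case: (l == ij.1);
  case: (s == leaderL _); case: (s == outY _).
Qed.

Lemma proj_rx_absorb ij w l : proj ij (rx_absorb w l).1 =1 proj ij (rx_absorb w l).2.
Proof.
move=> s; rewrite /proj /=; case: pickP => [l' /eqP ->|noX].
  rewrite (inj_eq (@inX_inj _ _)) inX_neq_leader inX_neq_out !if_same !addn0 !add0n.
  by case: (eqVneq l' l) => [->|]; [case: eqVneq|rewrite andbF if_same].
have -> : (s == inX (C ij) l) = false by exact: noX.
by rewrite andbF; case: ifP; case: ifP.
Qed.

Lemma proj_rx_min ij w : proj ij (rx_min w).1 =1 proj ij (rx_min w).2.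
Proof.
move=> s; rewrite /proj /=.
by case: pickP => [l _|_]; try case: (l == ij.1);
  case: (s == leaderL _); case: (s == outY _); case: (enabled w ij).
Qed.

Lemma proj_step ij c c' : step (C := min_crn) c c' -> reachable (proj ij c) (proj ij c').
Proof.
case/stepE => r Hr [Hle ->].
case/In_rxns: Hr => [E|[w [l E]]|[ij' [[r1 r2] [Hr0 E]]]|[w E]]; subst r.
- by rewrite (proj_fire_neutral Hle (@proj_rx_start ij)); apply: reach_refl.
- by rewrite (proj_fire_neutral Hle (@proj_rx_absorb ij w l)); apply: reach_refl.
- have [E|ne] := eqVneq ij ij'.
    subst ij'; have [Hle' ->] := proj_fire ij Hle; rewrite /= !proj_embed in Hle' *.
    exact/reachable1/step_fire.
  rewrite (proj_fire_neutral Hle); first exact: reach_refl.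
  by move=> s; rewrite /= !proj_embed_other.
- by rewrite (proj_fire_neutral Hle (@proj_rx_min ij w)); apply: reach_refl.
Qed.

Lemma proj_reach ij c c' : reach c c' -> reachable (proj ij c) (proj ij c').
Proof. exact: (@reachable_map d d min_crn (C ij) (proj ij) (@proj_step ij)). Qed.
Arguments proj_reach ij {c c'}.

Lemma proj_idle ij (c : spec -> nat) s : c sL0 = 0 -> (forall l, c (sX l) = 0) ->
  proj ij c s = c (sSub s) + (if s == outY (C ij) then c (sW ij) else 0).
Proof.
move=> L0 X0; rewrite /proj L0 if_same addn0.
by case: pickP => [l _|_]; rewrite ?X0 ?if_same addn0.
Qed.

Lemma lift_sub_run ij (u u' : config (C ij)) : reachable u u' ->
  forall c, proj ij c = u -> c sL0 = 0 -> (forall l, c (sX l) = 0) ->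
  exists2 c', reach c c' & proj ij c' = u'.
Proof.
elim=> [u0|u0 u1 u2 /stepE [[r1 r2] Hr0 [/= Hle ->]] _ IH] c Pc L0 X0.
  by exists c => //; apply: reach_refl.
have Hle' s : (rx_sub (r1, r2)).1 s <= c s.
  change (embed r1 s <= c s); case: (embed_cases r1 s) => [[s' -> ->]|-> //].
  have := Hle s'; rewrite -Pc proj_idle //.
  have [->|_] := eqVneq s' (outY (C ij)); last by rewrite /= addn0.
  (* C ij never consumes its output, the only species whose projection adds SW ij. *)
  by have /= -> := C_oblivious Hr0.
have [c' Rc' Pc'] : exists2 c', reach (fire (rx_sub (r1, r2)) c) c' & proj ij c' = u2.
  apply: IH; last by move=> l; rewrite /fire /= X0.
    by have [_ ->] := proj_fire ij Hle'; rewrite /= !proj_embed Pc.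
  by rewrite /fire /= L0.
by exists c' => //; apply: reach_step Rc'; apply: step_fire => //; apply: In_rx_sub.
Qed.

Lemma init_sX x l : init x (sX l) = x l.
Proof.
rewrite /init_config /=; case: pickP => [i /eqP E|/(_ l)]; last by rewrite eqxx.
by rewrite (sX_inj E).
Qed.

Lemma init_sL0 x : init x sL0 = 1.
Proof. by rewrite /init_config eqxx. Qed.

Lemma init_other x s : s != sL0 -> (forall l, s != sX l) -> init x s = 0.
Proof.
move=> sL0' sX'; rewrite /init_config /= (negbTE sL0').
by case: pickP => [i /eqP E|//]; move: (sX' i); rewrite E eqxx.
Qed.

Lemma proj_init x ij :
  proj ij (init x) = @init_config d (C ij) (fun k => if k == ij.1 then 0 else x k).
Proof.
apply: functional_extensionality => s.
rewrite /proj init_sL0 !init_other // if_same addn0 [in RHS]/init_config.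
case: pickP => [l /eqP sE|_]; last by case: (s == _).
have -> : (s == leaderL (C ij)) = false by rewrite sE inX_neq_leader.
by rewrite init_sX; case: (l == ij.1).
Qed.

Definition absorbed (x : vec d) (c : spec -> nat) : vec d := fun l => x l - c (sX l).

Definition unstarted (x : vec d) (c : spec -> nat) : Prop :=
  [/\ c sL0 = 1, forall w, c (sL w) = 0, forall l, c (sX l) = x l,
      forall k, c (sA k) = 0 & c sY = 0 /\ forall ij, c (sW ij) = 0].

Definition started (x : vec d) (c : spec -> nat) : Prop :=
  [/\ c sL0 = 0, forall w, c (sL w) = nat_of_bool (w == redv (absorbed x c)),
      forall l, c (sX l) <= x l,
      forall k, c (sA k) + c sY = gval k (absorbed x c)
    & forall ij : restr, absorbed x c ij.1 <= ij.2 -> c (sW ij) = c sY].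

Definition invariant (x : vec d) (c : spec -> nat) : Prop := unstarted x c \/ started x c.

Lemma unstarted_init x : unstarted x (init x).
Proof.
split; [exact: init_sL0 | by move=> w; apply: init_other | exact: init_sX
       | by move=> k; apply: init_other | split; [|move=> ij]; exact: init_other].
Qed.

Lemma started_rx_start x c : unstarted x c -> started x (fire rx_start c).
Proof.
move=> [L0 Lw Xl A0 [Y0 W0]].
have abs0 : absorbed x (fire rx_start c) = fun=> 0.
  by apply: functional_extensionality => l; rewrite /absorbed /fire /= Xl subn0 addn0 subnn.
rewrite /started abs0; split.
- by rewrite /fire /= L0.
- by move=> w; rewrite /fire /= Lw.
- by move=> l; rewrite /fire /= Xl subn0 addn0.
- by move=> k; rewrite /fire /= A0 Y0; lia.
- by move=> ij _; rewrite /fire /= W0 Y0.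
Qed.

Lemma started_rx_absorb x w l c : started x c ->
  (forall s, (rx_absorb w l).1 s <= c s) -> started x (fire (rx_absorb w l) c).
Proof.
move=> [L0 Lw Xl AY WY] Hle.
have Ew : w = redv (absorbed x c) by have := Hle (sL w); rewrite /= eqxx Lw; case: eqP.
have Xl_gt0 : 0 < c (sX l) by have := Hle (sX l); rewrite /= eqxx.
have abs' : absorbed x (fire (rx_absorb w l) c) = incr_at (absorbed x c) l.
  apply: functional_extensionality => i; move: Xl_gt0 (Xl i).
  by rewrite /absorbed /incr_at /fire /=; case: (eqVneq i l) => [->|_]; lia.
rewrite /started abs'; split.
- by rewrite /fire /= L0.
- by move=> w'; rewrite /fire /= Lw redv_incr -Ew subnn.
- by move=> i; move: (Xl i); rewrite /fire /=; case: (i == l); lia.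
- by move=> k; move: (AY k); rewrite /fire /= gval_incr -Ew; lia.
- move=> ij le_ij; rewrite /fire /= !subn0 !addn0; apply: WY.
  by move: le_ij; rewrite /incr_at; case: (ij.1 == l); lia.
Qed.

Lemma started_rx_min x w c : started x c ->
  (forall s, (rx_min w).1 s <= c s) -> started x (fire (rx_min w) c).
Proof.
move=> [L0 Lw Xl AY WY] Hle.
have Ew : w = redv (absorbed x c) by have := Hle (sL w); rewrite /= eqxx Lw; case: eqP.
have abs' : absorbed x (fire (rx_min w) c) = absorbed x c.
  by apply: functional_extensionality => i; rewrite /absorbed /fire /= subn0 addn0.
rewrite /started abs'; split.
- by rewrite /fire /= L0.
- by move=> w'; rewrite /fire /= Lw -Ew; case: (w' == w).
- by move=> i; rewrite /fire /= subn0 addn0.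
- by move=> k; move: (Hle (sA k)) (AY k); rewrite /fire /=; lia.
- by move=> ij le_ij; rewrite /fire /= (WY ij le_ij) Ew enabled_redv le_ij.
Qed.

Lemma invariant_rx_sub x ij r0 c : invariant x c -> invariant x (fire (@rx_sub ij r0) c).
Proof.
have E s : (if s is SSub _ then false else true) -> fire (rx_sub r0) c s = c s.
  by case: s => [l|[b|[w|[k|[u|ij']]]]] //= _; rewrite /fire /= subn0 addn0.
have abs' : absorbed x (fire (rx_sub r0) c) = absorbed x c.
  by apply: functional_extensionality => l; rewrite /absorbed E.
case=> [[L0 Lw Xl A0 [Y0 W0]]|[L0 Lw Xl AY WY]]; [left|right].
  split; rewrite ?E //; [move=> w|move=> l|move=> k|split; [|move=> ij']];
  by rewrite ?E.
rewrite /started abs'; split; rewrite ?E //.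
- by move=> w; rewrite E.
- by move=> l; rewrite E.
- by move=> k; rewrite !E.
- by move=> ij' /WY; rewrite !E.
Qed.

Lemma invariant_step x c c' : step (C := min_crn) c c' -> invariant x c -> invariant x c'.
Proof.
case/stepE => r Hr [Hle ->] Ic.
case/In_rxns: Hr => [E|[w [l E]]|[ij [r0 [_ E]]]|[w E]]; subst r.
- case: Ic => [U|[L0 _ _ _ _]]; first by right; apply: started_rx_start.
  by have := Hle sL0; rewrite L0.
- case: Ic => [[_ Lw _ _ _]|S]; last by right; apply: started_rx_absorb.
  by have := Hle (sL w); rewrite /= eqxx Lw.
- exact: invariant_rx_sub.
- case: Ic => [[_ Lw _ _ _]|S]; last by right; apply: started_rx_min.
  by have := Hle (sL w); rewrite /= eqxx Lw.
Qed.

Lemma invariant_reach x c : reach (init x) c -> invariant x c.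
Proof. by move=> R; apply: (reachable_inv (@invariant_step x) R); left; apply: unstarted_init. Qed.

Lemma started_reach x c : reach (init x) c -> c sL0 = 0 -> started x c.
Proof. by move=> /invariant_reach [[L0 _ _ _ _]|//]; rewrite L0. Qed.

Lemma reach_L0_free x c : reach (init x) c -> exists2 c', reach c c' & c' sL0 = 0.
Proof.
move=> /invariant_reach [[L0 _ _ _ _]|[L0 _ _ _ _]]; last first.
  by exists c => //; apply: reach_refl.
exists (fire rx_start c); last by rewrite /fire /= L0.
apply/reachable1/step_fire; first exact: In_rx_start.
by case=> [l|[[]|[w|[k|[u|ij]]]]] //=; rewrite -/sL0 L0.
Qed.

Lemma reach_X_free x l c : reach (init x) c -> c sL0 = 0 ->
  exists2 c', reach c c' & c' (sX l) = 0.
Proof.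
move Ek: (c (sX l)) => k; elim: k c Ek => [|k IH] c Ek Rc L0.
  by exists c => //; apply: reach_refl.
have [_ Lw _ _ _] := started_reach Rc L0.
set w := redv (absorbed x c) in Lw.
have Hs : step (C := min_crn) c (fire (rx_absorb w l) c).
  apply: step_fire; first exact: In_rx_absorb.
  case=> [l'|[b|[w'|[k'|[u|ij]]]]] //=.
  - by case: eqP => [->|_] //; rewrite -/(sX l) Ek.
  - by case: eqP => [->|_] //; rewrite -/(sL w) Lw eqxx.
have Ek' : fire (rx_absorb w l) c (sX l) = k by rewrite /fire /= eqxx Ek /= subn1 addn0.
have L0' : fire (rx_absorb w l) c sL0 = 0 by rewrite /fire /= L0.
have [c' Rc' Xc'] := IH _ Ek' (reachable_trans Rc (reachable1 Hs)) L0'.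
by exists c' => //; apply: reach_step Hs Rc'.
Qed.

Definition absorbed_run (x : vec d) (c : spec -> nat) : Prop :=
  [/\ reach (init x) c, c sL0 = 0 & forall l, c (sX l) = 0].

Lemma absorbed_run_reach x c c' : absorbed_run x c -> reach c c' -> absorbed_run x c'.
Proof.
move=> [Rc L0 X0] R; split; first exact: reachable_trans Rc R.
  by have := reach_L0_le R; rewrite L0; lia.
by move=> l; have := reach_X_le l R; rewrite X0; lia.
Qed.

Lemma reach_absorbed_run x c : reach (init x) c -> exists2 c', reach c c' & absorbed_run x c'.
Proof.
move=> Rc; have [c1 R1 L1] := reach_L0_free Rc.
have [||c2 R2 X2] := reachable_forall_goals
    (I := fun c => reach (init x) c /\ c sL0 = 0) (Q := fun l c => c (sX l) = 0) _ _
    (fun l c Ic => reach_X_free l Ic.1 Ic.2) (conj (reachable_trans Rc R1) L1).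
- move=> c' c'' [Rc' L0] R; split; first exact: reachable_trans Rc' R.
  by have := reach_L0_le R; rewrite L0; lia.
- by move=> l c' c'' X0 R; have := reach_X_le l R; rewrite X0; lia.
exists c2; first exact: reachable_trans R1 R2.
split; [exact: reachable_trans (reachable_trans Rc R1) R2 | | exact: X2].
by have := reach_L0_le R2; rewrite L1; lia.
Qed.

Definition sub_done (x : vec d) (ij : restr) (c : spec -> nat) : Prop :=
  stable (proj ij c) /\ proj ij c (outY (C ij)) = fix_input f ij.1 ij.2 x.

Lemma sub_done_reach x ij c c' : sub_done x ij c -> reach c c' -> sub_done x ij c'.
Proof.
move=> [S V] R; have R' := proj_reach ij R.
by split; [exact: stable_reachable S R' | rewrite (S _ R')].
Qed.

Lemma reach_sub_done x ij c : absorbed_run x c -> exists2 c', reach c c' & sub_done x ij c'.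
Proof.
move=> [Rc L0 X0]; have := proj_reach ij Rc.
rewrite proj_init => /C_computes [O [RO SO VO]].
have [c' Rc' Pc'] := lift_sub_run RO (erefl _) L0 X0.
exists c' => //; rewrite /sub_done Pc' VO; split => //.
by apply: fix_input_eq => k /negbTE ->.
Qed.

Definition exhausted (x : vec d) (c : spec -> nat) : bool :=
  [exists k, c (sA k) == 0]
  || [exists ij, enabled (redv x) ij && (c (sSub (outY (C ij))) == 0)].

Lemma absorbed_run_counts x c : absorbed_run x c ->
  [/\ forall w, c (sL w) = nat_of_bool (w == redv x),
      forall k, c (sA k) + c sY = gval k x
    & forall ij : restr, x ij.1 <= ij.2 -> c (sW ij) = c sY].
Proof.
move=> [Rc L0 X0]; have [_ Lw _ AY WY] := started_reach Rc L0.
have absx : absorbed x c = x.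
  by apply: functional_extensionality => l; rewrite /absorbed X0 subn0.
by rewrite absx in Lw AY WY.
Qed.

Lemma absorbed_run_proj_out x c ij : absorbed_run x c ->
  proj ij c (outY (C ij)) = c (sSub (outY (C ij))) + c (sW ij).
Proof. by move=> [_ L0 X0]; rewrite proj_idle // eqxx. Qed.

Lemma reach_exhausted x c : absorbed_run x c -> exists2 c', reach c c' & exhausted x c'.
Proof.
move Ek: (c (sA ord0)) => k; elim: k c Ek => [|k IH] c Ek Ac.
  exists c; first exact: reach_refl.
  by apply/orP; left; apply/existsP; exists ord0; rewrite Ek.
have [Ex|] := boolP (exhausted x c); first by exists c => //; apply: reach_refl.
rewrite negb_or !negb_exists => /andP [/forallP A_gt0 /forallP out_gt0].
have [Lw _ _] := absorbed_run_counts Ac.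
have Hs : step (C := min_crn) c (fire (rx_min (redv x)) c).
  apply: step_fire; first exact: In_rx_min.
  case=> [l|[b|[w|[k'|[[ij s]|ij]]]]] //=.
  - by case: eqP => [->|_] //; rewrite -/(sL _) Lw eqxx.
  - by rewrite lt0n; apply: A_gt0.
  - case: eqP => [->|_]; rewrite ?andbF ?andbT //.
    by have := out_gt0 ij; case: (enabled _ _) => //=; rewrite lt0n.
have Ek' : fire (rx_min (redv x)) c (sA ord0) = k by rewrite /fire /= Ek subn1 addn0.
have [c' Rc' Ex'] := IH _ Ek' (absorbed_run_reach Ac (reachable1 Hs)).
by exists c' => //; apply: reach_step Hs Rc'.
Qed.

Lemma gval_eq_f x : (forall i, M <= x i) -> exists k, gval k x = f x.
Proof.
move=> Mx; have vx : vmax x M = x.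
  by apply: functional_extensionality => i; rewrite /vmax (maxn_idPl (Mx i)).
have [_ [k fk]] := f_min (vle_n_vmax x); rewrite vx in fk.
by exists k; rewrite /gval vx -fk.
Qed.

Lemma output_le_f x c : absorbed_run x c -> (forall ij, sub_done x ij c) -> c sY <= f x.
Proof.
move=> Ac D; have [_ AY WY] := absorbed_run_counts Ac.
have [/forallP Mx|] := boolP [forall i, M <= x i].
  by have [k gk] := gval_eq_f Mx; have := AY k; rewrite gk; lia.
rewrite negb_forall => /existsP [i]; rewrite -ltnNge => xi_lt.
pose ij : restr := (i, Ordinal xi_lt); have [_ V] := D ij.
rewrite (absorbed_run_proj_out _ Ac) (WY ij (leqnn _)) /= fix_input_id in V.
by rewrite -V leq_addl.
Qed.

Lemma f_le_output x c : absorbed_run x c -> (forall ij, sub_done x ij c) ->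
  exhausted x c -> f x <= c sY.
Proof.
move=> Ac D; have [_ AY WY] := absorbed_run_counts Ac.
case/orP => [/existsP [k /eqP A0]|/existsP [ij /andP [en /eqP O0]]].
  by have := AY k; have := f_le_gval k x; rewrite A0; lia.
rewrite enabled_redv in en; have [_ V] := D ij.
rewrite (absorbed_run_proj_out _ Ac) O0 (WY ij en) add0n in V.
by rewrite V; apply: fix_input_ge.
Qed.

Lemma exhausted_output_max x c c' : absorbed_run x c -> (forall ij, sub_done x ij c) ->
  exhausted x c -> reach c c' -> c' sY <= c sY.
Proof.
move=> Ac D Ex R; have Ac' := absorbed_run_reach Ac R.
have [_ AY WY] := absorbed_run_counts Ac; have [_ AY' WY'] := absorbed_run_counts Ac'.
case/orP: Ex => [/existsP [k /eqP A0]|/existsP [ij /andP [en /eqP O0]]].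
  by have := AY k; have := AY' k; rewrite A0; lia.
rewrite enabled_redv in en; have [S _] := D ij.
have := S _ (proj_reach ij R).
rewrite (absorbed_run_proj_out _ Ac') (absorbed_run_proj_out _ Ac) O0 (WY ij en) (WY' ij en).
lia.
Qed.

Lemma min_crn_computes : stably_computes min_crn f.
Proof.
move=> x c Rc.
have [c1 R1 A1] := reach_absorbed_run Rc.
have [c2 R2 D2] := reachable_forall_goals (C := min_crn)
  (@absorbed_run_reach x) (@sub_done_reach x) (@reach_sub_done x) A1.
have A2 := absorbed_run_reach A1 R2.
have [O R3 EO] := reach_exhausted A2.
have AO := absorbed_run_reach A2 R3.
have DO ij := sub_done_reach (D2 ij) R3.
exists O; split.
- exact: reachable_trans R1 (reachable_trans R2 R3).
- move=> c' R'; change (c' sY = O sY); apply/eqP.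
  by rewrite eqn_leq (reach_Y_ge R') andbT; apply: exhausted_output_max AO DO EO R'.
- change (O sY = f x); apply/eqP.
  by rewrite eqn_leq output_le_f //; apply: f_le_output.
Qed.

End Construction.

Theorem lemma15 (d : nat) (f : vec d -> nat) :
  nondecreasing_nat f ->
  (exists (m : nat) (g : 'I_m.+1 -> vec d -> int) (n : vec d),
      (forall k, quilt_affine (g k)) /\
      forall x, vle n x ->
        (forall k, (Posz (f x) <= g k x)%R) /\ exists k, Posz (f x) = g k x) ->
  (forall (i : 'I_d) (j : nat), obliviously_computable (fix_input f i j)) ->
  obliviously_computable f.
Proof.
move=> f_mono [m [g [n [g_quilt f_min]]]] f_restr.
have [P P_gt0 g_periodic] := common_incr_period g_quilt.
pose M := \max_(i < d) n i.
have n_le_M i : n i <= M by apply: leq_bigmax.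
have [C C_ok] := fin_all_exists (fun ij : restr d M => f_restr ij.1 ij.2).
exists (min_crn g P_gt0 C); split; first exact: min_crn_oblivious.
apply: (min_crn_computes (n := n)) => // [k x y|ij|ij].
- exact: (g_quilt k).1.
- exact: (C_ok ij).1.
- exact: (C_ok ij).2.
Qed.
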